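(* Let $\alpha>0$ be irrational and $A=\begin{bmatrix} m_1&n_1\\ m_2&n_2\end{bmatrix}\in GL(2,\mathbb Z)$. Then $\pi(A)$ restricts to an isometric automorphism of $\mathcal A_\alpha$ if and only if $m_1+\alpha n_1>0$ and $n_1\alpha^2+(m_1-n_2)\alpha-m_2=0$.
   Context: For $f\in C(\mathbb T^2)$ (with $\mathbb T$ the unit circle), the Fourier transform is $\hat f(m,n)=\int_{\mathbb T^2} f(e^{is},e^{it})e^{-i(ms+nt)}\,d\mu$, $\mu$ normalized Lebesgue measure. For a positive irrational $\alpha$, $\mathcal A_\alpha=\{f\in C(\mathbb T^2): \hat f(m,n)=0 \text{ whenever } m+\alpha n<0\}$, a uniform algebra with the sup norm on $\mathbb T^2$. For $A=\begin{bmatrix} a&b\\ c&d\end{bmatrix}\in GL(2,\mathbb Z)$, $\pi(A):C(\mathbb T^2)\to C(\mathbb T^2)$ is $\pi(A)(f)=f\circ\varphi$ with $\varphi(z,w)=(z^aw^b,z^cw^d)$. *)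

From Stdlib Require Import Reals ZArith ClassicalEpsilon.
Open Scope R_scope.

Definition C : Type := (R * R)%type.
Definition C0 : C := (0, 0).
Definition Cadd (z w : C) : C := (fst z + fst w, snd z + snd w).
Definition Cmul (z w : C) : C :=
  (fst z * fst w - snd z * snd w, fst z * snd w + snd z * fst w).
Definition Cmod (z : C) : R := sqrt (fst z ^ 2 + snd z ^ 2).

(* A function on T^2 is represented in angle coordinates:
   F s t = f(e^{is}, e^{it}). *)
Definition fun_T2 : Type := R -> R -> C.

Definition cont_T2 (F : fun_T2) : Prop :=
  (forall s t, F (s + 2 * PI) t = F s t /\ F s (t + 2 * PI) = F s t) /\
  (forall s t eps, eps > 0 -> exists delta, delta > 0 /\
     forall s' t', Rabs (s' - s) < delta -> Rabs (t' - t) < delta ->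
       Cmod (Cadd (F s' t') (- fst (F s t), - snd (F s t))) < eps).

(* Value of the Riemann integral of g over [a,b] (when it exists; it does
   for all integrands used below, which are continuous). *)
Definition RInt (g : R -> R) (a b : R) : R :=
  epsilon (inhabits 0)
    (fun v => exists pr : Riemann_integrable g a b, RiemannInt pr = v).

(* Iterated integral over [0,2PI]^2 (equals the double integral for
   continuous integrands, by Fubini). *)
Definition Int2 (g : R -> R -> R) : R :=
  RInt (fun t => RInt (fun s => g s t) 0 (2 * PI)) 0 (2 * PI).

(* Fourier transform w.r.t. normalized Lebesgue measure on T^2:
   hat f(m,n) = (1/(4 PI^2)) * int int F(s,t) e^{-i(ms+nt)} ds dt. *)
Definition fourier (F : fun_T2) (m n : Z) : C :=
  let th s t := IZR m * s + IZR n * t in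
  ( / (4 * PI ^ 2) *
      Int2 (fun s t => fst (F s t) * cos (th s t) + snd (F s t) * sin (th s t)),
    / (4 * PI ^ 2) *
      Int2 (fun s t => snd (F s t) * cos (th s t) - fst (F s t) * sin (th s t))).

Definition in_Aalpha (alpha : R) (F : fun_T2) : Prop :=
  cont_T2 F /\
  forall m n : Z, IZR m + alpha * IZR n < 0 -> fourier F m n = C0.

Definition irrational (x : R) : Prop :=
  ~ exists p q : Z, q <> 0%Z /\ x = IZR p / IZR q.

Definition in_GL2Z (a b c d : Z) : Prop :=
  (a * d - b * c = 1)%Z \/ (a * d - b * c = -1)%Z.

(* pi(A) f = f o phi, phi(z,w) = (z^a w^b, z^c w^d); in angle coordinates
   (s,t) |-> (a s + b t, c s + d t). *)
Definition piA (a b c d : Z) (F : fun_T2) : fun_T2 :=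
  fun s t => F (IZR a * s + IZR b * t) (IZR c * s + IZR d * t).

Definition is_supnorm (F : fun_T2) (M : R) : Prop :=
  is_lub (fun x => exists s t, x = Cmod (F s t)) M.

Definition feq (F G : fun_T2) : Prop := forall s t, F s t = G s t.

Definition restricts_to_isometric_automorphism (alpha : R) (a b c d : Z) : Prop :=
  (forall F, in_Aalpha alpha F -> in_Aalpha alpha (piA a b c d F)) /\
  (forall G, in_Aalpha alpha G ->
     exists F, in_Aalpha alpha F /\ feq (piA a b c d F) G) /\
  (forall F1 F2, in_Aalpha alpha F1 -> in_Aalpha alpha F2 ->
     feq (piA a b c d F1) (piA a b c d F2) -> feq F1 F2) /\
  (forall F1 F2, in_Aalpha alpha F1 -> in_Aalpha alpha F2 ->
     feq (piA a b c d (fun s t => Cadd (F1 s t) (F2 s t)))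
         (fun s t => Cadd (piA a b c d F1 s t) (piA a b c d F2 s t)) /\
     feq (piA a b c d (fun s t => Cmul (F1 s t) (F2 s t)))
         (fun s t => Cmul (piA a b c d F1 s t) (piA a b c d F2 s t))) /\
  (forall (k : C) F, in_Aalpha alpha F ->
     feq (piA a b c d (fun s t => Cmul k (F s t)))
         (fun s t => Cmul k (piA a b c d F s t))) /\
  (forall F M, in_Aalpha alpha F ->
     (is_supnorm F M <-> is_supnorm (piA a b c d F) M)).

From Pilot Require Import Defs.
From Stdlib Require Import Reals ZArith Lra Lia.
From Stdlib Require Import FunctionalExtensionality PropExtensionality ClassicalEpsilon.
From Coquelicot Require Import Coquelicot.
Open Scope R_scope.

(* Composition with [phi(s, t) = (a s + b t, c s + d t)] sends the character [e_(m,n)] to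
   [e_((m,n) A)], and since Lebesgue measure on the torus is invariant under GL(2,Z) (it
   suffices to check shears, one reflection and the swap of coordinates, which generate the
   group), it carries the Fourier coefficient of [f] at [(m, n)] to that of [f o phi] at
   [(m, n) A]. As [(m,n) A . (1, alpha) = (m,n) . A (1, alpha)], pi(A) maps [A_alpha] into
   itself as soon as [A (1, alpha) = lambda (1, alpha)] with [lambda > 0]. Conversely,
   testing on characters shows that the linear form [(m,n) . A (1, alpha)] is nonnegative on
   the lattice half-plane [m + alpha n > 0]; this forces it to be a nonnegative multiple of
   [m + alpha n], nonzero because alpha is irrational. The inverse matrix has the same
   eigenvector, so pi(A) is onto; multiplicativity is automatic and the sup norm is preserved
   because phi is a bijection of the torus. *)

Lemma ex_RInt_cont (g : R -> R) (a b : R) :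
  (forall x, continuous g x) -> ex_RInt g a b.
Proof. intro Hg. apply (ex_RInt_continuous (V := R_CompleteNormedModule)); auto. Qed.

Lemma Defs_RInt_eq (g : R -> R) (a b : R) :
  ex_RInt g a b -> Defs.RInt g a b = RInt g a b.
Proof.
  intro Hg. unfold Defs.RInt.
  destruct (epsilon_spec (inhabits 0)
    (fun v => exists pr : Riemann_integrable g a b, RiemannInt pr = v)) as [pr <-].
  - exists (RInt g a b), (ex_RInt_Reals_0 _ _ _ Hg). symmetry. apply RInt_Reals.
  - symmetry. apply RInt_Reals.
Qed.

Lemma periodic_Z (g : R -> R) :
  (forall x, g (x + 2 * PI) = g x) -> forall (k : Z) x, g (x + 2 * PI * IZR k) = g x.
Proof.
  intros Hg k. induction k as [|k IH|k IH] using Z.peano_ind; intro x.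
  - f_equal. ring.
  - rewrite succ_IZR, <- (IH x), <- (Hg (x + 2 * PI * IZR k)). f_equal. ring.
  - rewrite <- (Hg (x + 2 * PI * IZR (Z.pred k))), <- (IH x).
    f_equal. rewrite <- Z.sub_1_r, minus_IZR. ring.
Qed.

Section PeriodicIntegral.

Variable g : R -> R.
Hypothesis g_cont : forall x, continuous g x.
Hypothesis g_per : forall x, g (x + 2 * PI) = g x.

Lemma RInt_Chasles_cont (a b c : R) : RInt g a b + RInt g b c = RInt g a c.
Proof. apply (RInt_Chasles (V := R_CompleteNormedModule)); apply ex_RInt_cont, g_cont. Qed.

Lemma RInt_swap_bounds (a b : R) : RInt g b a = - RInt g a b.
Proof.
  rewrite <- (opp_RInt_swap (V := R_CompleteNormedModule)); [reflexivity |].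
  apply ex_RInt_cont, g_cont.
Qed.

Lemma RInt_translate (c a b : R) :
  RInt (fun y => g (y + c)) a b = RInt g (a + c) (b + c).
Proof.
  replace (a + c) with (1 * a + c) by ring. replace (b + c) with (1 * b + c) by ring.
  rewrite <- (RInt_comp_lin (V := R_CompleteNormedModule)) by apply ex_RInt_cont, g_cont.
  apply RInt_ext. intros y _. unfold scal; simpl; unfold mult; simpl.
  rewrite Rmult_1_l. f_equal. ring.
Qed.

Lemma RInt_reflect (a b : R) :
  RInt (fun y => g (- y)) a b = RInt g (- b) (- a).
Proof.
  rewrite RInt_swap_bounds.
  replace (- a) with (-1 * a + 0) by ring. replace (- b) with (-1 * b + 0) by ring.
  rewrite <- (RInt_comp_lin (V := R_CompleteNormedModule)) by apply ex_RInt_cont, g_cont.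
  rewrite <- (RInt_opp (V := R_CompleteNormedModule)).
  - apply RInt_ext. intros y _. unfold scal, opp; simpl; unfold mult; simpl.
    replace (-1 * y + 0) with (- y) by ring. ring.
  - apply (ex_RInt_comp_lin (V := R_CompleteNormedModule)), ex_RInt_cont, g_cont.
Qed.

(* Split [[c, 2 PI + c]] at [0] and [2 PI]; the last piece is [[c, 0]] shifted by a period. *)
Lemma RInt_period_translate (c : R) :
  RInt (fun y => g (y + c)) 0 (2 * PI) = RInt g 0 (2 * PI).
Proof.
  rewrite RInt_translate, Rplus_0_l.
  assert (Htail : RInt g (2 * PI + c) (2 * PI) = RInt g c 0).
  { transitivity (RInt (fun y => g (y + 2 * PI)) c 0).
    - rewrite RInt_translate. f_equal; ring.
    - apply RInt_ext. intros y _. apply g_per. }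
  rewrite <- (RInt_Chasles_cont c 0 (2 * PI + c)), <- (RInt_Chasles_cont 0 (2 * PI) (2 * PI + c)).
  rewrite (RInt_swap_bounds (2 * PI + c) (2 * PI)), Htail, (RInt_swap_bounds 0 c).
  lra.
Qed.

Lemma RInt_period_reflect : RInt (fun y => g (- y)) 0 (2 * PI) = RInt g 0 (2 * PI).
Proof.
  rewrite RInt_reflect, Ropp_0, <- (RInt_period_translate (- (2 * PI))), RInt_translate.
  f_equal; ring.
Qed.

End PeriodicIntegral.

Definition continuous_2d (h : R -> R -> R) : Prop := forall s t, continuity_2d_pt h s t.

Lemma continuous_2d_linear (h : R -> R -> R) (a b c d : R) :
  continuous_2d h -> continuous_2d (fun s t => h (a * s + b * t) (c * s + d * t)).
Proof.
  assert (Hlin : forall (p q : R) (z : R * R),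
    continuous (fun z : R * R => p * fst z + q * snd z) z).
  { intros p q [x y].
    apply (continuous_plus (fun z : R * R => p * fst z) (fun z : R * R => q * snd z)).
    - apply (continuous_mult (fun _ => p) fst); [apply continuous_const | apply continuous_fst].
    - apply (continuous_mult (fun _ => q) snd); [apply continuous_const | apply continuous_snd]. }
  intros Hh s t. apply continuity_2d_pt_filterlim.
  apply (continuous_comp_2 (fun z : R * R => a * fst z + b * snd z)
                           (fun z : R * R => c * fst z + d * snd z) h (s, t)); auto.
  apply continuity_2d_pt_filterlim, Hh.
Qed.

Lemma continuous_2d_swap (h : R -> R -> R) :
  continuous_2d h -> continuous_2d (fun t s => h s t).
Proof.
  intros Hh s t. apply (continuity_2d_pt_ext (fun s t => h (0 * s + 1 * t) (1 * s + 0 * t))).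
  - intros x y. f_equal; ring.
  - apply continuous_2d_linear, Hh.
Qed.

Lemma continuous_2d_l (h : R -> R -> R) (t : R) :
  continuous_2d h -> forall s, continuous (fun s => h s t) s.
Proof.
  intros Hh s.
  apply (continuous_comp_2 (fun s => s) (fun _ => t) h s);
    [apply continuous_id | apply continuous_const |].
  apply continuity_2d_pt_filterlim, Hh.
Qed.

Lemma continuous_RInt_param_le (h : R -> R -> R) (a b t0 : R) : continuous_2d h -> a <= b ->
  continuous (fun t => RInt (fun s => h s t) a b) t0.
Proof.
  intros Hh Hab. apply continuity_pt_filterlim.
  unfold continuity_pt, continue_in, limit1_in, limit_in; simpl; unfold R_dist.
  intros eps Heps.
  assert (Heps' : 0 < eps / (b - a + 1)) by (apply Rdiv_lt_0_compat; lra).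
  destruct (uniform_continuity_2d_1d h a b t0 (fun x _ => Hh x t0) (mkposreal _ Heps'))
    as [d Hd]; simpl in Hd.
  exists d. split; [apply cond_pos |]. intros t [_ Ht].
  assert (Hex : forall t, ex_RInt (fun s => h s t) a b)
    by (intro; apply ex_RInt_cont, continuous_2d_l, Hh).
  rewrite <- (RInt_minus (V := R_CompleteNormedModule)) by auto.
  eapply Rle_lt_trans.
  - apply abs_RInt_le_const with (M := eps / (b - a + 1)); [exact Hab | |].
    + apply (ex_RInt_minus (V := R_NormedModule)); auto.
    + intros s Hs. left. pose proof (cond_pos d).
      apply (Hd s t0 s t); try lra.
      * apply Rabs_lt_between' in Ht. lra.
      * rewrite Rminus_diag, Rabs_R0. lra.
  - apply Rmult_lt_reg_r with (b - a + 1); [lra |].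
    replace ((b - a) * (eps / (b - a + 1)) * (b - a + 1)) with ((b - a) * eps)
      by (field; lra).
    nra.
Qed.

Lemma continuous_RInt_param (h : R -> R -> R) (a b t0 : R) : continuous_2d h ->
  continuous (fun t => RInt (fun s => h s t) a b) t0.
Proof.
  intro Hh. destruct (Rle_dec a b) as [Hab | Hab].
  - apply continuous_RInt_param_le; auto.
  - apply (continuous_ext (fun t => - RInt (fun s => h s t) b a)).
    + intro t. rewrite (RInt_swap_bounds (fun s : R => h s t) (continuous_2d_l h t Hh) b a).
      reflexivity.
    + apply (continuous_opp (fun t => RInt (fun s => h s t) b a)).
      apply continuous_RInt_param_le; auto. lra.
Qed.

Lemma is_derive_RInt_cont (g : R -> R) (a x : R) :
  (forall y, continuous g y) -> is_derive (fun x => RInt g a x) x (g x).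
Proof.
  intro Hg. apply (is_derive_RInt (V := R_CompleteNormedModule)) with (a := a); [| apply Hg].
  exists (mkposreal 1 Rlt_0_1). intros y _.
  apply (RInt_correct (V := R_CompleteNormedModule)), ex_RInt_cont, Hg.
Qed.

Lemma is_derive_zero_eq (f : R -> R) (a b : R) : (forall x, is_derive f x 0) -> f a = f b.
Proof.
  intro Hf.
  destruct (MVT_cor4 f (fun _ => 0) a (Rabs (b - a))) with (b := b) as [c [Hc _]];
    auto; lra.
Qed.

(* Both sides, as functions of the upper bound [b], vanish at [a] and have derivative
   [RInt (fun t => h b t) c d]. *)
Lemma Fubini_RInt (h : R -> R -> R) (a b c d : R) : continuous_2d h ->
  RInt (fun t => RInt (fun s => h s t) a b) c d =
  RInt (fun s => RInt (fun t => h s t) c d) a b.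
Proof.
  intro Hh.
  set (Phi := fun x t => RInt (fun s => h s t) a x).
  assert (DPhi : forall x t, is_derive (fun x => Phi x t) x (h x t))
    by (intros x t; apply (is_derive_RInt_cont (fun s => h s t)), continuous_2d_l, Hh).
  assert (DLhs : forall x, is_derive (fun x => RInt (fun t => Phi x t) c d) x
                                     (RInt (fun t => h x t) c d)).
  { intro x.
    rewrite (RInt_ext (fun t => h x t) (fun t => Derive (fun u => Phi u t) x))
      by (intros t _; symmetry; apply is_derive_unique, DPhi).
    apply is_derive_RInt_param.
    - exists (mkposreal 1 Rlt_0_1). intros y _ t _. eexists. apply DPhi.
    - intros t _. apply continuity_2d_pt_ext with (f := h); [| apply Hh].
      intros u v. symmetry. apply is_derive_unique, DPhi.
    - exists (mkposreal 1 Rlt_0_1). intros y _.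
      apply ex_RInt_cont. intro t. apply continuous_RInt_param, Hh. }
  assert (DRhs : forall x, is_derive (fun x => RInt (fun s => RInt (fun t => h s t) c d) a x) x
                                     (RInt (fun t => h x t) c d)).
  { intro x. apply (is_derive_RInt_cont (fun s => RInt (fun t => h s t) c d)).
    intro y. apply (continuous_RInt_param (fun t s => h s t)), continuous_2d_swap, Hh. }
  assert (Hdiff : forall x, is_derive (fun x => RInt (fun t => Phi x t) c d -
                    RInt (fun s => RInt (fun t => h s t) c d) a x) x 0).
  { intro x. pose proof (is_derive_minus _ _ x _ _ (DLhs x) (DRhs x)) as Hx.
    rewrite minus_eq_zero in Hx. exact Hx. }
  pose proof (is_derive_zero_eq _ a b Hdiff) as Hab. unfold Phi in Hab.
  rewrite (RInt_point a (fun s => RInt (fun t => h s t) c d)) in Hab.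
  rewrite (RInt_ext _ (fun _ => 0)) in Hab
    by (intros; exact (RInt_point (V := R_CompleteNormedModule) a _)).
  rewrite RInt_const in Hab. unfold scal, zero in Hab; simpl in Hab; unfold mult in Hab.
  simpl in Hab. lra.
Qed.

Definition torus_function (h : R -> R -> R) : Prop :=
  continuous_2d h /\
  (forall s t, h (s + 2 * PI) t = h s t) /\ (forall s t, h s (t + 2 * PI) = h s t).

Definition torus_integral (h : R -> R -> R) : R :=
  RInt (fun t => RInt (fun s => h s t) 0 (2 * PI)) 0 (2 * PI).

Definition linsubst (a b c d : Z) (h : R -> R -> R) : R -> R -> R :=
  fun s t => h (IZR a * s + IZR b * t) (IZR c * s + IZR d * t).

Lemma torus_function_linsubst (a b c d : Z) (h : R -> R -> R) :
  torus_function h -> torus_function (linsubst a b c d h).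
Proof.
  intros (Hc & Hs & Ht). unfold linsubst.
  assert (Hper : forall (k l : Z) x y, h (x + 2 * PI * IZR k) (y + 2 * PI * IZR l) = h x y).
  { intros k l x y. rewrite (periodic_Z (fun x => h x _)) by (intro; apply Hs).
    apply (periodic_Z (fun y => h x y)). intro; apply Ht. }
  split; [| split]; intros s t.
  - apply continuous_2d_linear, Hc.
  - rewrite <- (Hper a c (IZR a * s + IZR b * t)). f_equal; ring.
  - rewrite <- (Hper b d (IZR a * s + IZR b * t)). f_equal; ring.
Qed.

Lemma torus_integral_ext (h1 h2 : R -> R -> R) :
  (forall s t, h1 s t = h2 s t) -> torus_integral h1 = torus_integral h2.
Proof.
  intro H. unfold torus_integral. apply RInt_ext. intros t _. apply RInt_ext. intros s _. apply H.
Qed.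

Lemma torus_integral_translate (k : R) (h : R -> R -> R) :
  torus_function h -> torus_integral (fun s t => h (s + k * t) t) = torus_integral h.
Proof.
  intros (Hc & Hs & _). unfold torus_integral. apply RInt_ext. intros t _.
  apply (RInt_period_translate (fun s => h s t)); [apply continuous_2d_l, Hc | intro; apply Hs].
Qed.

Lemma torus_integral_reflect (h : R -> R -> R) :
  torus_function h -> torus_integral (fun s t => h (- s) t) = torus_integral h.
Proof.
  intros (Hc & Hs & _). unfold torus_integral. apply RInt_ext. intros t _.
  apply (RInt_period_reflect (fun s => h s t)); [apply continuous_2d_l, Hc | intro; apply Hs].
Qed.

Lemma torus_integral_swap (h : R -> R -> R) :
  torus_function h -> torus_integral (fun s t => h t s) = torus_integral h.
Proof.
  intros (Hc & _). unfold torus_integral. symmetry. apply Fubini_RInt, Hc.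
Qed.

Definition preserves_torus_integral (a b c d : Z) : Prop :=
  forall h, torus_function h -> torus_integral (linsubst a b c d h) = torus_integral h.

(* [linsubst A (linsubst E h) = linsubst (E * A) h]: substitutions compose contravariantly. *)
Lemma preserves_torus_integral_mul (e f g k a b c d a' b' c' d' : Z) :
  preserves_torus_integral e f g k -> preserves_torus_integral a b c d ->
  a' = (e * a + f * c)%Z -> b' = (e * b + f * d)%Z ->
  c' = (g * a + k * c)%Z -> d' = (g * b + k * d)%Z ->
  preserves_torus_integral a' b' c' d'.
Proof.
  intros HE HA -> -> -> -> h Hh.
  rewrite <- (HE h Hh), <- (HA _ (torus_function_linsubst e f g k h Hh)).
  apply torus_integral_ext. intros s t. unfold linsubst.
  rewrite !plus_IZR, !mult_IZR. f_equal; ring.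
Qed.

Lemma preserves_torus_integral_shear (k : Z) : preserves_torus_integral 1 k 0 1.
Proof.
  intros h Hh. rewrite <- (torus_integral_translate (IZR k) h Hh).
  apply torus_integral_ext. intros s t. unfold linsubst. f_equal; simpl; ring.
Qed.

Lemma preserves_torus_integral_reflect : preserves_torus_integral (-1) 0 0 1.
Proof.
  intros h Hh. rewrite <- (torus_integral_reflect h Hh).
  apply torus_integral_ext. intros s t. unfold linsubst. f_equal; simpl; ring.
Qed.

Lemma preserves_torus_integral_swap : preserves_torus_integral 0 1 1 0.
Proof.
  intros h Hh. rewrite <- (torus_integral_swap h Hh).
  apply torus_integral_ext. intros s t. unfold linsubst. f_equal; simpl; ring.
Qed.

Lemma preserves_torus_integral_diag (a d : Z) :
  (a = 1 \/ a = -1)%Z -> (d = 1 \/ d = -1)%Z -> preserves_torus_integral a 0 0 d.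
Proof.
  assert (Hr2 : preserves_torus_integral 1 0 0 (-1)).
  { apply (preserves_torus_integral_mul 0 1 1 0 0 (-1) 1 0);
      [apply preserves_torus_integral_swap | | reflexivity..].
    apply (preserves_torus_integral_mul (-1) 0 0 1 0 1 1 0);
      [apply preserves_torus_integral_reflect | apply preserves_torus_integral_swap
      | reflexivity..]. }
  intros [-> | ->] [-> | ->].
  - apply (preserves_torus_integral_shear 0).
  - exact Hr2.
  - exact preserves_torus_integral_reflect.
  - apply (preserves_torus_integral_mul (-1) 0 0 1 1 0 0 (-1));
      [apply preserves_torus_integral_reflect | exact Hr2 | reflexivity..].
Qed.

Lemma preserves_torus_integral_upper (a b d : Z) :
  (a * d = 1 \/ a * d = -1)%Z -> preserves_torus_integral a b 0 d.
Proof.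
  intro Had.
  assert (Hunit : ((a = 1 \/ a = -1) /\ (d = 1 \/ d = -1))%Z).
  { destruct Had as [H | H].
    - destruct (Z.mul_eq_1 _ _ H) as [-> | ->]; lia.
    - assert (H' : (a * - d = 1)%Z) by lia. destruct (Z.mul_eq_1 _ _ H') as [-> | ->]; lia. }
  destruct Hunit as [Ha Hd].
  apply (preserves_torus_integral_mul 1 (b * d) 0 1 a 0 0 d);
    [apply preserves_torus_integral_shear | apply preserves_torus_integral_diag; auto | ..];
    try ring.
  destruct Hd as [-> | ->]; ring.
Qed.

(* Euclid's algorithm on the first column: a shear by [Z.quot a c] followed by a row swap
   replaces [c] by [Z.rem a c]. *)
Lemma preserves_torus_integral_GL2Z (a b c d : Z) :
  in_GL2Z a b c d -> preserves_torus_integral a b c d.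
Proof.
  remember (Z.abs_nat c) as n eqn:Hn. revert a b c d Hn.
  induction n as [n IH] using lt_wf_ind. intros a b c d -> Hdet. unfold in_GL2Z in Hdet.
  destruct (Z.eq_dec c 0) as [-> | Hc].
  { apply preserves_torus_integral_upper. lia. }
  set (q := Z.quot a c). set (r := Z.rem a c).
  assert (Ha : a = (c * q + r)%Z) by apply Z.quot_rem'.
  assert (Hr : (Z.abs r < Z.abs c)%Z) by now apply Z.rem_bound_abs.
  apply (preserves_torus_integral_mul 1 q 0 1 r (b - q * d) c d);
    [apply preserves_torus_integral_shear | | lia | ring | ring | ring].
  apply (preserves_torus_integral_mul 0 1 1 0 c d r (b - q * d));
    [apply preserves_torus_integral_swap | | ring..].
  apply (IH (Z.abs_nat r)); [lia | reflexivity |]. unfold in_GL2Z. rewrite Ha in Hdet. lia.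
Qed.

Lemma Int2_torus_integral (h : R -> R -> R) : continuous_2d h -> Int2 h = torus_integral h.
Proof.
  intro Hh. unfold Int2, torus_integral.
  replace (fun t => Defs.RInt (fun s => h s t) 0 (2 * PI))
    with (fun t => RInt (fun s => h s t) 0 (2 * PI)).
  - apply Defs_RInt_eq, ex_RInt_cont. intro t. apply continuous_RInt_param, Hh.
  - apply functional_extensionality. intro t. symmetry.
    apply Defs_RInt_eq, ex_RInt_cont, continuous_2d_l, Hh.
Qed.

Lemma torus_function_plus (h1 h2 : R -> R -> R) : torus_function h1 -> torus_function h2 ->
  torus_function (fun s t => h1 s t + h2 s t).
Proof.
  intros (Hc1 & Hs1 & Ht1) (Hc2 & Hs2 & Ht2). split; [| split]; intros s t.
  - apply continuity_2d_pt_plus; auto.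
  - rewrite Hs1, Hs2. reflexivity.
  - rewrite Ht1, Ht2. reflexivity.
Qed.

Lemma torus_function_minus (h1 h2 : R -> R -> R) : torus_function h1 -> torus_function h2 ->
  torus_function (fun s t => h1 s t - h2 s t).
Proof.
  intros (Hc1 & Hs1 & Ht1) (Hc2 & Hs2 & Ht2). split; [| split]; intros s t.
  - apply continuity_2d_pt_minus; auto.
  - rewrite Hs1, Hs2. reflexivity.
  - rewrite Ht1, Ht2. reflexivity.
Qed.

Lemma torus_function_mult (h1 h2 : R -> R -> R) : torus_function h1 -> torus_function h2 ->
  torus_function (fun s t => h1 s t * h2 s t).
Proof.
  intros (Hc1 & Hs1 & Ht1) (Hc2 & Hs2 & Ht2). split; [| split]; intros s t.
  - apply continuity_2d_pt_mult; auto.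
  - rewrite Hs1, Hs2. reflexivity.
  - rewrite Ht1, Ht2. reflexivity.
Qed.

Lemma torus_function_wave (f : R -> R) (m n : Z) :
  (forall x, continuous f x) -> (forall x, f (x + 2 * PI) = f x) ->
  torus_function (fun s t => f (IZR m * s + IZR n * t)).
Proof.
  intros Hc Hper. apply (torus_function_linsubst m n 0 0 (fun x _ => f x)).
  split; [| split]; intros s t.
  - apply continuity_1d_2d_pt_comp; [apply continuity_pt_filterlim, Hc |].
    apply continuity_2d_pt_id1.
  - apply Hper.
  - reflexivity.
Qed.

Lemma cos_add_2PI (x : R) : cos (x + 2 * PI) = cos x.
Proof. rewrite cos_plus, cos_2PI, sin_2PI. ring. Qed.

Lemma sin_add_2PI (x : R) : sin (x + 2 * PI) = sin x.
Proof. rewrite sin_plus, cos_2PI, sin_2PI. ring. Qed.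

Lemma torus_function_cos (m n : Z) : torus_function (fun s t => cos (IZR m * s + IZR n * t)).
Proof.
  apply torus_function_wave; [| exact cos_add_2PI].
  intro x. apply continuity_pt_filterlim, continuity_cos.
Qed.

Lemma torus_function_sin (m n : Z) : torus_function (fun s t => sin (IZR m * s + IZR n * t)).
Proof.
  apply torus_function_wave; [| exact sin_add_2PI].
  intro x. apply continuity_pt_filterlim, continuity_sin.
Qed.

Lemma Rabs_fst_le_Cmod (z : Defs.C) : Rabs (fst z) <= Defs.Cmod z.
Proof.
  unfold Defs.Cmod. rewrite <- sqrt_Rsqr_abs. apply sqrt_le_1_alt. unfold Rsqr. nra.
Qed.

Lemma Rabs_snd_le_Cmod (z : Defs.C) : Rabs (snd z) <= Defs.Cmod z.
Proof.
  unfold Defs.Cmod. rewrite <- sqrt_Rsqr_abs. apply sqrt_le_1_alt. unfold Rsqr. nra.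
Qed.

Lemma Cmod_le_Rabs_sum (z : Defs.C) : Defs.Cmod z <= Rabs (fst z) + Rabs (snd z).
Proof.
  pose proof (Rabs_pos (fst z)). pose proof (Rabs_pos (snd z)).
  unfold Defs.Cmod. rewrite <- (sqrt_Rsqr (Rabs (fst z) + Rabs (snd z))) by lra.
  apply sqrt_le_1_alt. pose proof (Rsqr_abs (fst z)). pose proof (Rsqr_abs (snd z)).
  unfold Rsqr in *. nra.
Qed.

Lemma cont_T2_components (F : fun_T2) : cont_T2 F ->
  torus_function (fun s t => fst (F s t)) /\ torus_function (fun s t => snd (F s t)).
Proof.
  intros [Hper Hc].
  assert (Hcomp : forall pr : Defs.C -> R,
    (forall z, Rabs (pr z) <= Defs.Cmod z) ->
    (forall z w, pr (Defs.Cadd z w) = pr z + pr w) ->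
    (forall z, pr (- fst z, - snd z) = - pr z) ->
    continuous_2d (fun s t => pr (F s t))).
  { intros pr Hle Hadd Hopp s t eps.
    destruct (Hc s t eps (cond_pos eps)) as [d [Hd Hdelta]].
    exists (mkposreal d Hd). intros u v Hu Hv. simpl in Hu, Hv.
    eapply Rle_lt_trans; [| apply (Hdelta u v Hu Hv)].
    unfold Rminus. rewrite <- Hopp, <- Hadd. apply Hle. }
  split; (split; [| split; intros s t;
    [rewrite (proj1 (Hper s t)) | rewrite (proj2 (Hper s t))]; reflexivity]).
  - apply Hcomp; [exact Rabs_fst_le_Cmod | reflexivity | reflexivity].
  - apply Hcomp; [exact Rabs_snd_le_Cmod | reflexivity | reflexivity].
Qed.

Lemma cont_T2_of_components (F : fun_T2) :
  torus_function (fun s t => fst (F s t)) -> torus_function (fun s t => snd (F s t)) ->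
  cont_T2 F.
Proof.
  intros (Hc1 & Hs1 & Ht1) (Hc2 & Hs2 & Ht2). split.
  - intros s t. rewrite (surjective_pairing (F (s + 2 * PI) t)),
      (surjective_pairing (F s (t + 2 * PI))), (surjective_pairing (F s t)).
    rewrite Hs1, Hs2, Ht1, Ht2. split; reflexivity.
  - intros s t eps Heps.
    destruct (Hc1 s t (mkposreal (eps / 2) ltac:(lra))) as [d1 Hd1].
    destruct (Hc2 s t (mkposreal (eps / 2) ltac:(lra))) as [d2 Hd2].
    exists (Rmin d1 d2). split; [apply Rmin_pos; apply cond_pos |].
    intros u v Hu Hv. pose proof (Rmin_l d1 d2). pose proof (Rmin_r d1 d2).
    specialize (Hd1 u v ltac:(lra) ltac:(lra)). specialize (Hd2 u v ltac:(lra) ltac:(lra)).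
    simpl in Hd1, Hd2.
    eapply Rle_lt_trans; [apply Cmod_le_Rabs_sum |]. simpl. unfold Rminus in *. lra.
Qed.

Definition fourier_re (F : fun_T2) (m n : Z) (s t : R) : R :=
  fst (F s t) * cos (IZR m * s + IZR n * t) + snd (F s t) * sin (IZR m * s + IZR n * t).

Definition fourier_im (F : fun_T2) (m n : Z) (s t : R) : R :=
  snd (F s t) * cos (IZR m * s + IZR n * t) - fst (F s t) * sin (IZR m * s + IZR n * t).

Lemma torus_function_fourier_re (F : fun_T2) (m n : Z) :
  cont_T2 F -> torus_function (fourier_re F m n).
Proof.
  intro HF. destruct (cont_T2_components F HF) as [H1 H2].
  apply torus_function_plus; apply torus_function_mult;
    auto using torus_function_cos, torus_function_sin.
Qed.

Lemma torus_function_fourier_im (F : fun_T2) (m n : Z) :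
  cont_T2 F -> torus_function (fourier_im F m n).
Proof.
  intro HF. destruct (cont_T2_components F HF) as [H1 H2].
  apply torus_function_minus; apply torus_function_mult;
    auto using torus_function_cos, torus_function_sin.
Qed.

Lemma fourier_torus_integral (F : fun_T2) (m n : Z) : cont_T2 F ->
  fourier F m n = (/ (4 * PI ^ 2) * torus_integral (fourier_re F m n),
                   / (4 * PI ^ 2) * torus_integral (fourier_im F m n)).
Proof.
  intro HF.
  change (fourier F m n) with (/ (4 * PI ^ 2) * Int2 (fourier_re F m n),
                               / (4 * PI ^ 2) * Int2 (fourier_im F m n)).
  rewrite !Int2_torus_integral; [reflexivity | |].
  - apply torus_function_fourier_im, HF.
  - apply torus_function_fourier_re, HF.
Qed.

Lemma cont_T2_piA (a b c d : Z) (F : fun_T2) : cont_T2 F -> cont_T2 (piA a b c d F).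
Proof.
  intro HF. destruct (cont_T2_components F HF) as [H1 H2].
  apply cont_T2_of_components.
  - exact (torus_function_linsubst a b c d _ H1).
  - exact (torus_function_linsubst a b c d _ H2).
Qed.

Lemma phase_comp (a b c d m n : Z) (s t : R) :
  IZR (m * a + n * c) * s + IZR (m * b + n * d) * t =
  IZR m * (IZR a * s + IZR b * t) + IZR n * (IZR c * s + IZR d * t).
Proof. rewrite !plus_IZR, !mult_IZR. ring. Qed.

Lemma fourier_piA (a b c d m n : Z) (F : fun_T2) : in_GL2Z a b c d -> cont_T2 F ->
  fourier (piA a b c d F) (m * a + n * c) (m * b + n * d) = fourier F m n.
Proof.
  intros Hdet HF.
  rewrite !fourier_torus_integral by auto using cont_T2_piA.
  rewrite <- (preserves_torus_integral_GL2Z a b c d Hdet (fourier_re F m n))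
    by apply torus_function_fourier_re, HF.
  rewrite <- (preserves_torus_integral_GL2Z a b c d Hdet (fourier_im F m n))
    by apply torus_function_fourier_im, HF.
  f_equal; f_equal; apply torus_integral_ext; intros s t;
    unfold fourier_re, fourier_im, piA, linsubst; rewrite phase_comp; reflexivity.
Qed.

Lemma RInt_cos_affine (j : Z) (c : R) : j <> 0%Z ->
  RInt (fun s => cos (IZR j * s + c)) 0 (2 * PI) = 0.
Proof.
  intro Hj. apply not_0_IZR in Hj.
  set (G := fun x => sin (IZR j * x + c) / IZR j).
  assert (HG : is_RInt (fun s => cos (IZR j * s + c)) 0 (2 * PI) (minus (G (2 * PI)) (G 0))).
  { apply (is_RInt_derive (V := R_CompleteNormedModule)); intros x _; unfold G.
    - auto_derive; [exact I | field; exact Hj].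
    - apply continuous_cos_comp.
      apply (ex_derive_continuous (K := R_AbsRing) (V := R_NormedModule)). auto_derive. exact I. }
  rewrite (is_RInt_unique _ _ _ _ HG). unfold G, minus, plus, opp; simpl.
  replace (IZR j * (2 * PI) + c) with (c + 2 * PI * IZR j) by ring.
  rewrite (periodic_Z sin sin_add_2PI). replace (IZR j * 0 + c) with c by ring. ring.
Qed.

Lemma RInt_sin_affine (j : Z) (c : R) : j <> 0%Z ->
  RInt (fun s => sin (IZR j * s + c)) 0 (2 * PI) = 0.
Proof.
  intro Hj. rewrite <- (RInt_cos_affine j (c - PI / 2) Hj) at 2.
  apply RInt_ext. intros s _.
  replace (IZR j * s + (c - PI / 2)) with (IZR j * s + c - PI / 2) by ring.
  rewrite cos_minus, cos_PI2, sin_PI2. simpl. lra.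
Qed.

Lemma torus_integral_wave (f : R -> R) (k l : Z) :
  (forall x, continuous f x) -> (forall x, f (x + 2 * PI) = f x) ->
  (forall (j : Z) (c : R), j <> 0%Z -> RInt (fun s => f (IZR j * s + c)) 0 (2 * PI) = 0) ->
  (k, l) <> (0%Z, 0%Z) -> torus_integral (fun s t => f (IZR k * s + IZR l * t)) = 0.
Proof.
  intros Hc Hper Hmean Hkl.
  assert (Hinner : forall j i : Z, j <> 0%Z ->
            torus_integral (fun s t => f (IZR j * s + IZR i * t)) = 0).
  { intros j i Hj. unfold torus_integral.
    rewrite (RInt_ext _ (fun _ => 0)) by (intros; apply Hmean, Hj).
    rewrite RInt_const. unfold scal; simpl; unfold mult; simpl. ring. }
  destruct (Z.eq_dec k 0) as [-> | Hk]; [| auto].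
  assert (Hl : l <> 0%Z) by congruence.
  rewrite <- torus_integral_swap by (apply torus_function_wave; auto).
  transitivity (torus_integral (fun s t => f (IZR l * s + IZR 0 * t))); [| apply Hinner, Hl].
  apply torus_integral_ext. intros s t. f_equal. ring.
Qed.

Definition character (m n : Z) : fun_T2 :=
  fun s t => (cos (IZR m * s + IZR n * t), sin (IZR m * s + IZR n * t)).

Lemma cont_T2_character (m n : Z) : cont_T2 (character m n).
Proof.
  apply cont_T2_of_components; [apply torus_function_cos | apply torus_function_sin].
Qed.

Lemma piA_character (a b c d m n : Z) :
  piA a b c d (character m n) = character (m * a + n * c) (m * b + n * d).
Proof.
  apply functional_extensionality. intro s. apply functional_extensionality. intro t.
  unfold piA, character. rewrite phase_comp. reflexivity.
Qed.

Lemma fourier_character (m n p q : Z) : fourier (character m n) p q =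
  (/ (4 * PI ^ 2) * torus_integral (fun s t => cos (IZR (m - p) * s + IZR (n - q) * t)),
   / (4 * PI ^ 2) * torus_integral (fun s t => sin (IZR (m - p) * s + IZR (n - q) * t))).
Proof.
  rewrite fourier_torus_integral by apply cont_T2_character.
  f_equal; f_equal; apply torus_integral_ext; intros s t;
    unfold fourier_re, fourier_im, character; simpl.
  - rewrite <- cos_minus. f_equal. rewrite !minus_IZR. ring.
  - rewrite (Rmult_comm (sin _)), (Rmult_comm (cos _) (sin _)), <- sin_minus.
    f_equal. rewrite !minus_IZR. ring.
Qed.

Lemma fourier_character_same (m n : Z) : fourier (character m n) m n = (1, 0).
Proof.
  rewrite fourier_character, !Z.sub_diag.
  assert (Hphase0 : forall s t, IZR 0 * s + IZR 0 * t = 0) by (intros; ring).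
  rewrite (torus_integral_ext (fun s t => cos (IZR 0 * s + IZR 0 * t)) (fun _ _ => 1))
    by (intros; rewrite Hphase0; apply cos_0).
  rewrite (torus_integral_ext (fun s t => sin (IZR 0 * s + IZR 0 * t)) (fun _ _ => 0))
    by (intros; rewrite Hphase0; apply sin_0).
  unfold torus_integral. rewrite !RInt_const. unfold scal; simpl; unfold mult; simpl.
  pose proof PI_RGT_0. f_equal; field; lra.
Qed.

Lemma fourier_character_other (m n p q : Z) :
  (p, q) <> (m, n) -> fourier (character m n) p q = C0.
Proof.
  intro Hpq. assert (Hnz : (m - p, n - q)%Z <> (0%Z, 0%Z)).
  { intro E. injection E. intros. apply Hpq. f_equal; lia. }
  rewrite fourier_character, (torus_integral_wave cos), (torus_integral_wave sin); auto.
  - unfold C0. f_equal; ring.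
  - intro x. apply continuity_pt_filterlim, continuity_sin.
  - exact sin_add_2PI.
  - exact RInt_sin_affine.
  - intro x. apply continuity_pt_filterlim, continuity_cos.
  - exact cos_add_2PI.
  - exact RInt_cos_affine.
Qed.

Lemma irrational_Z_independent (alpha : R) (m n : Z) : irrational alpha ->
  IZR m + alpha * IZR n = 0 -> m = 0%Z /\ n = 0%Z.
Proof.
  intros Hirr H. destruct (Z.eq_dec n 0) as [-> | Hn].
  - split; [apply eq_IZR; lra | reflexivity].
  - exfalso. apply Hirr. exists (- m)%Z, n. split; [exact Hn |].
    apply not_0_IZR in Hn. apply (Rmult_eq_reg_r (IZR n)); [| exact Hn].
    unfold Rdiv. rewrite opp_IZR, Rmult_assoc, Rinv_l by exact Hn. lra.
Qed.

Lemma Z_shift_into_unit_interval (y : R) : exists m : Z, 0 < IZR m + y <= 1.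
Proof. exists (up (- y)). destruct (archimed (- y)). lra. Qed.

Lemma Z_mul_lt (del x : R) : del <> 0 -> exists n : Z, IZR n * del < x.
Proof.
  intro Hdel. set (N := up (Rabs x / Rabs del)).
  assert (HN : Rabs x < IZR N * Rabs del).
  { destruct (archimed (Rabs x / Rabs del)) as [HN _]. fold N in HN.
    apply Rabs_pos_lt in Hdel.
    apply (Rmult_lt_compat_r (Rabs del)) in HN; [| exact Hdel].
    unfold Rdiv in HN. rewrite Rmult_assoc, Rinv_l in HN; lra. }
  pose proof (Rle_abs (- x)). rewrite Rabs_Ropp in *.
  destruct (Rdichotomy _ _ Hdel) as [Hneg | Hpos].
  - exists N. rewrite (Rabs_left del), Ropp_mult_distr_r_reverse in HN by lra. lra.
  - exists (- N)%Z. rewrite opp_IZR, Ropp_mult_distr_l_reverse.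
    rewrite (Rabs_pos_eq del) in HN by lra. lra.
Qed.

(* If [mu <> alpha lam], the form is negative at a lattice point just above the line
   [m + alpha n = 0] and far enough from the origin. *)
Lemma lattice_halfplane_form (alpha lam mu : R) :
  (forall m n : Z, 0 < IZR m + alpha * IZR n -> 0 <= IZR m * lam + IZR n * mu) ->
  mu = alpha * lam /\ 0 <= lam.
Proof.
  intro H.
  assert (Hmu : mu = alpha * lam).
  { destruct (Req_dec (mu - alpha * lam) 0) as [E | E]; [lra | exfalso].
    destruct (Z_mul_lt (mu - alpha * lam) (- Rabs lam) E) as [n Hn].
    destruct (Z_shift_into_unit_interval (alpha * IZR n)) as [m Hm].
    specialize (H m n ltac:(lra)).
    assert (Hlam : lam * (IZR m + alpha * IZR n) <= Rabs lam).
    { pose proof (Rle_abs lam). pose proof (Rabs_pos lam). nra. }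
    assert (IZR m * lam + IZR n * mu =
            lam * (IZR m + alpha * IZR n) + IZR n * (mu - alpha * lam)) by ring.
    lra. }
  split; [exact Hmu |]. specialize (H 1%Z 0%Z). simpl in H. lra.
Qed.

(* [(1, alpha)] is an eigenvector of [[a, b], [c, d]] with a positive eigenvalue. *)
Definition positive_eigenvector (alpha : R) (a b c d : Z) : Prop :=
  0 < IZR a + alpha * IZR b /\ IZR c + alpha * IZR d = alpha * (IZR a + alpha * IZR b).

Lemma positive_eigenvector_iff (alpha : R) (a b c d : Z) :
  positive_eigenvector alpha a b c d <->
  (IZR a + alpha * IZR b > 0 /\ IZR b * alpha ^ 2 + (IZR a - IZR d) * alpha - IZR c = 0).
Proof.
  unfold positive_eigenvector.
  assert (IZR b * alpha ^ 2 + (IZR a - IZR d) * alpha - IZR c =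
          alpha * (IZR a + alpha * IZR b) - (IZR c + alpha * IZR d)) by ring.
  split; intros [H1 H2]; split; lra.
Qed.

Lemma positive_eigenvector_pairing (alpha : R) (a b c d m n : Z) :
  positive_eigenvector alpha a b c d ->
  IZR (m * a + n * c) + alpha * IZR (m * b + n * d) =
  (IZR a + alpha * IZR b) * (IZR m + alpha * IZR n).
Proof.
  intros [_ Heig]. rewrite !plus_IZR, !mult_IZR.
  transitivity (IZR m * (IZR a + alpha * IZR b) + IZR n * (IZR c + alpha * IZR d)); [ring |].
  rewrite Heig. ring.
Qed.

Lemma GL2Z_det_sq (a b c d : Z) : in_GL2Z a b c d ->
  ((a * d - b * c) * (a * d - b * c) = 1)%Z.
Proof. intros [-> | ->]; reflexivity. Qed.

Lemma GL2Z_solve_row (a b c d : Z) : in_GL2Z a b c d ->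
  forall m' n' : Z, exists m n : Z, m' = (m * a + n * c)%Z /\ n' = (m * b + n * d)%Z.
Proof.
  intros Hdet m' n'. pose proof (GL2Z_det_sq a b c d Hdet) as HD.
  set (D := (a * d - b * c)%Z) in HD.
  exists (D * (d * m' - c * n'))%Z, (D * (a * n' - b * m'))%Z. split.
  - transitivity (D * D * m')%Z; [rewrite HD; ring | unfold D; ring].
  - transitivity (D * D * n')%Z; [rewrite HD; ring | unfold D; ring].
Qed.

Lemma GL2Z_solve_R (a b c d : Z) : in_GL2Z a b c d ->
  forall x y : R, exists s t : R, IZR a * s + IZR b * t = x /\ IZR c * s + IZR d * t = y.
Proof.
  intros Hdet x y. pose proof (f_equal IZR (GL2Z_det_sq a b c d Hdet)) as HD.
  rewrite mult_IZR, minus_IZR, !mult_IZR in HD.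
  set (D := IZR a * IZR d - IZR b * IZR c) in HD.
  exists (D * (IZR d * x - IZR b * y)), (D * (IZR a * y - IZR c * x)). split.
  - transitivity (D * D * x); [unfold D; ring | rewrite HD; ring].
  - transitivity (D * D * y); [unfold D; ring | rewrite HD; ring].
Qed.

Lemma in_Aalpha_piA (alpha : R) (a b c d : Z) (F : fun_T2) :
  in_GL2Z a b c d -> positive_eigenvector alpha a b c d ->
  in_Aalpha alpha F -> in_Aalpha alpha (piA a b c d F).
Proof.
  intros Hdet Hev [HF Hvan]. split; [apply cont_T2_piA, HF |].
  intros m' n' Hneg. destruct (GL2Z_solve_row a b c d Hdet m' n') as (m & n & -> & ->).
  rewrite fourier_piA by assumption. apply Hvan.
  rewrite (positive_eigenvector_pairing alpha a b c d m n Hev) in Hneg.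
  destruct Hev as [Hlam _]. nra.
Qed.

Lemma in_Aalpha_character (alpha : R) (m n : Z) :
  0 <= IZR m + alpha * IZR n -> in_Aalpha alpha (character m n).
Proof.
  intro Hmn. split; [apply cont_T2_character |].
  intros p q Hpq. apply fourier_character_other. intro E. injection E as -> ->. lra.
Qed.

Lemma character_not_in_Aalpha (alpha : R) (m n : Z) :
  IZR m + alpha * IZR n < 0 -> ~ in_Aalpha alpha (character m n).
Proof.
  intros Hmn [_ Hvan]. specialize (Hvan m n Hmn).
  rewrite fourier_character_same in Hvan. injection Hvan. lra.
Qed.

Lemma positive_eigenvector_of_stable (alpha : R) (a b c d : Z) :
  irrational alpha -> in_GL2Z a b c d ->
  (forall F, in_Aalpha alpha F -> in_Aalpha alpha (piA a b c d F)) ->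
  positive_eigenvector alpha a b c d.
Proof.
  intros Hirr Hdet Hstable.
  assert (Hform : forall m n : Z, 0 < IZR m + alpha * IZR n ->
    0 <= IZR m * (IZR a + alpha * IZR b) + IZR n * (IZR c + alpha * IZR d)).
  { intros m n Hmn. apply Rnot_lt_le. intro Hneg.
    apply (character_not_in_Aalpha alpha (m * a + n * c) (m * b + n * d)).
    - rewrite !plus_IZR, !mult_IZR. lra.
    - rewrite <- piA_character. apply Hstable, in_Aalpha_character. lra. }
  destruct (lattice_halfplane_form _ _ _ Hform) as [Heig Hlam].
  split; [| exact Heig].
  destruct Hlam as [Hlam | Hlam]; [exact Hlam | exfalso].
  destruct (irrational_Z_independent alpha a b Hirr (eq_sym Hlam)) as [-> ->].
  destruct Hdet; lia.
Qed.

(* The preimage is taken along the inverse matrix [D [[d, -b], [-c, a]]], [D = ad - bc],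
   which again has [(1, alpha)] as an eigenvector, with eigenvalue [1/lambda]. *)
Lemma piA_onto_Aalpha (alpha : R) (a b c d : Z) :
  in_GL2Z a b c d -> positive_eigenvector alpha a b c d ->
  forall G, in_Aalpha alpha G -> exists F, in_Aalpha alpha F /\ feq (piA a b c d F) G.
Proof.
  intros Hdet [Hlam Heig] G HG. pose proof (GL2Z_det_sq a b c d Hdet) as HD.
  set (D := (a * d - b * c)%Z) in HD.
  assert (HDr : IZR D = IZR a * IZR d - IZR b * IZR c)
    by (unfold D; rewrite minus_IZR, !mult_IZR; reflexivity).
  assert (HD2 : IZR D * IZR D = 1) by (rewrite <- mult_IZR, HD; reflexivity).
  exists (piA (D * d) (- (D * b)) (- (D * c)) (D * a) G). split.
  - apply in_Aalpha_piA; [| split | exact HG].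
    + assert (E : (D * d * (D * a) - - (D * b) * - (D * c) = D * D * D)%Z) by (unfold D; ring).
      unfold in_GL2Z. rewrite E, HD. unfold D. destruct Hdet; lia.
    + rewrite opp_IZR, !mult_IZR.
      assert (Hprod : (IZR a + alpha * IZR b) * (IZR D * IZR d + alpha * - (IZR D * IZR b)) = 1).
      { rewrite <- HD2.
        transitivity (IZR D * (IZR a * IZR d - IZR b * IZR c)
          + IZR D * IZR b * (IZR c + alpha * IZR d - alpha * (IZR a + alpha * IZR b)));
          [ring | rewrite Heig, <- HDr; ring]. }
      nra.
    + rewrite !opp_IZR, !mult_IZR.
      transitivity (IZR D * (alpha * IZR a - IZR c)); [ring |].
      transitivity (IZR D * (alpha * IZR d - alpha * alpha * IZR b)); [| ring].
      f_equal. lra.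
  - intros s t. unfold piA. rewrite !opp_IZR, !mult_IZR. f_equal.
    + transitivity (IZR D * (IZR a * IZR d - IZR b * IZR c) * s); [ring |].
      rewrite <- HDr, HD2. ring.
    + transitivity (IZR D * (IZR a * IZR d - IZR b * IZR c) * t); [ring |].
      rewrite <- HDr, HD2. ring.
Qed.

Lemma piA_injective (a b c d : Z) (F1 F2 : fun_T2) : in_GL2Z a b c d ->
  feq (piA a b c d F1) (piA a b c d F2) -> feq F1 F2.
Proof.
  intros Hdet H x y. destruct (GL2Z_solve_R a b c d Hdet x y) as (s & t & <- & <-).
  apply H.
Qed.

Lemma is_supnorm_piA (a b c d : Z) (F : fun_T2) (M : R) : in_GL2Z a b c d ->
  (is_supnorm F M <-> is_supnorm (piA a b c d F) M).
Proof.
  intro Hdet. unfold is_supnorm.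
  replace (fun x => exists s t, x = Defs.Cmod (piA a b c d F s t))
    with (fun x => exists s t, x = Defs.Cmod (F s t)); [reflexivity |].
  apply functional_extensionality. intro x. apply propositional_extensionality. split.
  - intros (u & v & Hx). destruct (GL2Z_solve_R a b c d Hdet u v) as (s & t & <- & <-).
    exists s, t. exact Hx.
  - intros (s & t & Hx). exists (IZR a * s + IZR b * t), (IZR c * s + IZR d * t). exact Hx.
Qed.

Theorem mainTheorem9 (alpha : R) (m1 n1 m2 n2 : Z)
  (Halpha : 0 < alpha) (Hirr : irrational alpha)
  (HA : in_GL2Z m1 n1 m2 n2) :
  restricts_to_isometric_automorphism alpha m1 n1 m2 n2 <->
  (IZR m1 + alpha * IZR n1 > 0 /\
   IZR n1 * alpha ^ 2 + (IZR m1 - IZR n2) * alpha - IZR m2 = 0).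
Proof.
  rewrite <- positive_eigenvector_iff. split.
  - intros [Hstable _]. exact (positive_eigenvector_of_stable alpha _ _ _ _ Hirr HA Hstable).
  - intro Hev. split; [| split; [| split; [| split; [| split]]]].
    + intros F HF. exact (in_Aalpha_piA alpha _ _ _ _ F HA Hev HF).
    + exact (piA_onto_Aalpha alpha _ _ _ _ HA Hev).
    + intros F1 F2 _ _. exact (piA_injective _ _ _ _ F1 F2 HA).
    + intros F1 F2 _ _. split; intros s t; reflexivity.
    + intros k F _ s t. reflexivity.
    + intros F M _. exact (is_supnorm_piA _ _ _ _ F M HA).
Qed.
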